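(* There is no rigid configuration in $\mathbb{RP}^2$ consisting of fewer than 6 points (counted with multiplicity). Up to projective transformations, there are exactly two rigid configurations of 6 points (counted with multiplicity) in $\mathbb{RP}^2$: (i) three non-collinear points, each of multiplicity $2$; (ii) six distinct points, projectively equivalent to $\{(0:0:1),(1:0:1),(0:1:1),(1:1:1),(1:0:0),(0:1:0)\}$ (six points lying on four lines, each line containing three of the points and each point lying on two of the lines).
   Context: A configuration in $\mathbb{RP}^\ell$ is a finite multiset of points. Its span $\operatorname{span}(A)$ is the smallest projective subspace containing $A$; $A$ is non-degenerate if $\operatorname{span}(A)=\mathbb{RP}^\ell$. $\mathcal H(A)$ denotes the set of all projective hyperplanes of the form $\operatorname{span}(A')$ for some sub-multiset $A'\subseteq A$. For a non-degenerate configuration $A$, a point $a\in A$ is locked if it lies on $\ell$ distinct hyperplanes in $\mathcal H(A\setminus\{a\})$ (where $A\setminus\{a\}$ removes one copy of $a$), and free otherwise. A non-degenerate configuration $A$ is rigid if every point of $A$ is locked. *)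

From HB Require Import structures.
From mathcomp Require Import all_boot all_order all_algebra all_fingroup.
From mathcomp Require Import reals.
Set Implicit Arguments. Unset Strict Implicit. Unset Printing Implicit Defensive.
Import Order.TTheory GRing.Theory Num.Theory.
Local Open Scope ring_scope.

(* A configuration of n points (counted with multiplicity) in RP^l is a family
   A : 'I_n -> 'rV[R]_(l.+1) of nonzero homogeneous coordinate vectors; the
   multiset is the family up to reindexing, and sub-multisets correspond to
   index subsets S : {set 'I_n}. *)
Definition is_config (R : realType) (l n : nat) (A : 'I_n -> 'rV[R]_(l.+1)) :=
  forall i, A i != 0.

Definition spanS (R : realType) (l n : nat) (A : 'I_n -> 'rV[R]_(l.+1))
  (S : {set 'I_n}) : 'M[R]_(l.+1) := (\sum_(i in S) <<A i>>)%MS.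

Definition nondegenerate (R : realType) (l n : nat) (A : 'I_n -> 'rV[R]_(l.+1)) :=
  \rank (spanS A setT) = l.+1.

Definition in_hyperplanes (R : realType) (l n : nat) (A : 'I_n -> 'rV[R]_(l.+1))
  (T : {set 'I_n}) (H : 'M[R]_(l.+1)) :=
  exists2 S : {set 'I_n}, S \subset T & ((H == spanS A S)%MS /\ \rank H = l).

Definition locked (R : realType) (l n : nat) (A : 'I_n -> 'rV[R]_(l.+1)) (i : 'I_n) :=
  exists H : 'I_l -> 'M[R]_(l.+1),
    [/\ forall k, in_hyperplanes A [set~ i] (H k),
        forall k, (A i <= H k)%MS &
        forall j k, j != k -> ~~ (H j == H k)%MS].

Definition rigid (R : realType) (l n : nat) (A : 'I_n -> 'rV[R]_(l.+1)) :=
  nondegenerate A /\ forall i, locked A i.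

Definition proj_equiv (R : realType) (l n : nat) (A B : 'I_n -> 'rV[R]_(l.+1)) :=
  exists2 M : 'M[R]_(l.+1), M \in unitmx &
    exists s : 'S_n, forall i, exists2 c : R, c != 0 & B (s i) = c *: (A i *m M).

Definition pt (R : realType) (a b c : R) : 'rV[R]_3 :=
  \row_(j < 3) nth 0 [:: a; b; c] j.

Definition fam6 (R : realType) (p : seq 'rV[R]_3) : 'I_6 -> 'rV[R]_3 :=
  fun i => nth 0 p i.

Definition config_i (R : realType) : 'I_6 -> 'rV[R]_3 :=
  fam6 [:: pt 1 0 0; pt 1 0 0; pt 0 1 0; pt 0 1 0; pt 0 0 1; pt (0:R) 0 1].

Definition config_ii (R : realType) : 'I_6 -> 'rV[R]_3 :=
  fam6 [:: pt 0 0 1; pt 1 0 1; pt 0 1 1; pt 1 1 1; pt 1 0 0; pt (0:R) 1 0].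

From Pilot Require Import Defs.
From HB Require Import structures.
From mathcomp Require Import all_boot all_order all_algebra all_fingroup.
From mathcomp Require Import reals ring lra.
Set Implicit Arguments. Unset Strict Implicit. Unset Printing Implicit Defensive.
Import Order.TTheory GRing.Theory Num.Theory.
Local Open Scope ring_scope.

(* Consider a rigid planar configuration of at most six points.  A locked point
   lies on two distinct lines, each spanned by two other points.  If every
   point is repeated, nondegeneracy gives three non-collinear points that are
   all doubled: configuration (i).  Otherwise a simple point [i] and its two
   locking lines [j1 k1], [j2 k2] give five distinct points.  If these were all
   the points up to repetition, then [j1] or [k1] would be simple, and such a
   point could only be locked along the line [i j1 k1]; so there is a sixth
   distinct point [z], and all six points are simple.  Then [z] is off both
   locking lines, and each of the two lines locking [z] joins a point of
   [{j1, k1}] to a point of [{j2, k2}]; these four lines are those of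
   configuration (ii).  Since [(1, 0, 0), (0, 1, 0), (0, 0, 1), (1, 1, 1)] is a
   projective frame, matching it in the configuration gives the projective
   equivalence, and rigidity is invariant under projective equivalence.  The
   lower bound [6 <= n] is the same analysis applied to fewer points. *)

Lemma det_mx33 (R : comNzRingType) (M : 'M[R]_3) : \det M =
  M 0 0 * (M 1 1 * M 2 2 - M 1 2 * M 2 1) + M 0 1 * (M 1 2 * M 2 0 - M 1 0 * M 2 2)
  + M 0 2 * (M 1 0 * M 2 1 - M 1 1 * M 2 0).
Proof.
pose f a b := M (inord a) (inord b).
have Mf i j : M i j = f i j by rewrite /f !inord_val.
rewrite (expand_det_row _ 0) !big_ord_recl big_ord0 /cofactor.
rewrite !(expand_det_row _ 0) !big_ord_recl !big_ord0 /cofactor !det_mx11 !mxE /=.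
by rewrite !Mf /= /bump /= !exprS !expr0; ring.
Qed.

Section TripleProduct.
Variable R : realFieldType.
Implicit Types (a b c : R) (p q r s u v w x y z : 'rV[R]_3).

Definition v0 p := p 0 0.
Definition v1 p := p 0 1.
Definition v2 p := p 0 2.

Lemma ord3P (j : 'I_3) : [\/ j = 0, j = 1 | j = 2].
Proof.
by case: j => [[|[|[|//]]] lt_j3]; [apply: Or31 | apply: Or32 | apply: Or33]; apply: val_inj.
Qed.

Lemma row3P p q : v0 p = v0 q -> v1 p = v1 q -> v2 p = v2 q -> p = q.
Proof. by move=> e0 e1 e2; apply/rowP => j; case: (ord3P j) => ->. Qed.

Lemma sum_ord3 (F : 'I_3 -> R) : \sum_j F j = F 0 + F 1 + F 2.
Proof. by rewrite !big_ord_recl big_ord0 addr0 addrA; congr (F _ + F _ + F _); apply: val_inj. Qed.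

Lemma coordZ a p :
  (v0 (a *: p) = a * v0 p) * (v1 (a *: p) = a * v1 p) * (v2 (a *: p) = a * v2 p).
Proof. by rewrite /v0 /v1 /v2 !mxE. Qed.

Lemma coordD p q :
  (v0 (p + q) = v0 p + v0 q) * (v1 (p + q) = v1 p + v1 q) * (v2 (p + q) = v2 p + v2 q).
Proof. by rewrite /v0 /v1 /v2 !mxE. Qed.

Lemma coordN p : (v0 (- p) = - v0 p) * (v1 (- p) = - v1 p) * (v2 (- p) = - v2 p).
Proof. by rewrite /v0 /v1 /v2 !mxE. Qed.

Definition coordE := (coordZ, coordD, coordN).

Lemma nonzero_coord p : p != 0 -> [\/ v0 p != 0, v1 p != 0 | v2 p != 0].
Proof.
move=> p_nz; apply/or3P; apply: contraNT p_nz; rewrite !negb_or !negbK.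
by case/and3P => /eqP e0 /eqP e1 /eqP e2; apply/eqP; apply: row3P; rewrite /v0 /v1 /v2 !mxE.
Qed.

(* A nonzero [p] represents a point of RP^2: [det3 x p q = 0] says that [x], [p], [q]
   are collinear and [parallel p q] that [p] and [q] are the same point. *)
Definition cross0 p q := v1 p * v2 q - v2 p * v1 q.
Definition cross1 p q := v2 p * v0 q - v0 p * v2 q.
Definition cross2 p q := v0 p * v1 q - v1 p * v0 q.
Definition cross p q : 'rV[R]_3 := \row_j [:: cross0 p q; cross1 p q; cross2 p q]`_j.
Definition det3 x p q := v0 x * cross0 p q + v1 x * cross1 p q + v2 x * cross2 p q.
Definition parallel p q := [&& cross0 p q == 0, cross1 p q == 0 & cross2 p q == 0].

Lemma crossE p q :
  (v0 (cross p q) = cross0 p q) * (v1 (cross p q) = cross1 p q) * (v2 (cross p q) = cross2 p q).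
Proof. by rewrite /v0 /v1 /v2 !mxE. Qed.

Ltac det3_ring := rewrite /det3 /cross0 /cross1 /cross2 ?coordE; ring.

Lemma det3E x y z : det3 x y z =
  v0 x * (v1 y * v2 z - v2 y * v1 z) + v1 x * (v2 y * v0 z - v0 y * v2 z)
  + v2 x * (v0 y * v1 z - v1 y * v0 z).
Proof. by []. Qed.

Lemma det3_cycle x y z : det3 x y z = det3 y z x. Proof. det3_ring. Qed.
Lemma det3_swap x y z : det3 x y z = - det3 x z y. Proof. det3_ring. Qed.
Lemma det3_scale a b c x y z : det3 (a *: x) (b *: y) (c *: z) = a * b * c * det3 x y z.
Proof. det3_ring. Qed.
Lemma det3_linear a b x y z w : det3 (a *: x + b *: y) z w = a * det3 x z w + b * det3 y z w.
Proof. det3_ring. Qed.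

Lemma det3_cramer x y z w :
  det3 x y z *: w = det3 w y z *: x + det3 x w z *: y + det3 x y w *: z.
Proof. by apply: row3P; det3_ring. Qed.

Lemma det3_eq0_cycle x y z : det3 x y z = 0 -> det3 y z x = 0.
Proof. by rewrite det3_cycle. Qed.
Lemma det3_eq0_swap x y z : det3 x y z = 0 -> det3 x z y = 0.
Proof. by rewrite det3_swap => /eqP; rewrite oppr_eq0 => /eqP. Qed.

Lemma det3_dup12 x y : det3 x x y = 0. Proof. det3_ring. Qed.
Lemma det3_dup13 x y : det3 y x y = 0. Proof. det3_ring. Qed.
Lemma det3_dup23 x y : det3 x y y = 0. Proof. det3_ring. Qed.

Lemma parallel_det3 p q w : parallel p q -> det3 w p q = 0.
Proof. by case/and3P => /eqP e0 /eqP e1 /eqP e2; rewrite /det3 e0 e1 e2; ring. Qed.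

Lemma parallel_of_det3 p q : (forall w, det3 w p q = 0) -> parallel p q.
Proof.
move=> det_0; move: (det_0 (cross p q)); rewrite /det3 !crossE => e.
have e0 : cross0 p q = 0 by nra.
have e1 : cross1 p q = 0 by nra.
have e2 : cross2 p q = 0 by nra.
by rewrite /parallel e0 e1 e2 eqxx.
Qed.

Lemma parallel_scale a b p : parallel (a *: p) (b *: p).
Proof.
by rewrite /parallel /cross0 /cross1 /cross2 !coordE; apply/and3P; split; apply/eqP; ring.
Qed.

Lemma parallelP p q : p != 0 -> reflect (exists a, q = a *: p) (parallel p q).
Proof.
move=> p_nz; apply: (iffP idP).
  case/and3P; rewrite /cross0 /cross1 /cross2 => /eqP e0 /eqP e1 /eqP e2.
  case: (nonzero_coord p_nz) => pj_nz;
    [exists (v0 q / v0 p) | exists (v1 q / v1 p) | exists (v2 q / v2 p)];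
    apply: row3P; rewrite !coordE ?mulfVK //;
    by rewrite mulrAC; apply: (mulIf pj_nz); rewrite mulfVK //; lra.
by case=> a ->; rewrite -[X in parallel X]scale1r parallel_scale.
Qed.

Lemma parallel_scale_neq0 p q : p != 0 -> q != 0 -> parallel p q ->
  exists2 a, a != 0 & q = a *: p.
Proof.
move=> p_nz q_nz /(parallelP _ p_nz) [a q_ap]; exists a => //.
by apply: contraNneq q_nz => a0; rewrite q_ap a0 scale0r.
Qed.

Lemma scale_inv_scale c p : c != 0 -> exists2 d, d != 0 & p = d *: (c *: p).
Proof. by move=> c_nz; exists c^-1; rewrite ?invr_eq0 // scalerA mulVf // scale1r. Qed.

Lemma parallel_sub p q : p != 0 -> parallel p q = (q <= p)%MS.
Proof. by move=> p_nz; apply/(parallelP _ p_nz)/sub_rVP. Qed.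

Lemma parallel_refl p : parallel p p.
Proof. by rewrite -[X in parallel X]scale1r -[X in parallel _ X]scale1r parallel_scale. Qed.

Lemma parallel_sym p q : parallel p q -> parallel q p.
Proof.
by case/and3P; rewrite /parallel /cross0 /cross1 /cross2 => /eqP e0 /eqP e1 /eqP e2;
  apply/and3P; split; apply/eqP; [rewrite -oppr0 -e0|rewrite -oppr0 -e1|rewrite -oppr0 -e2]; ring.
Qed.

Lemma parallel_trans q p r : q != 0 -> parallel p q -> parallel q r -> parallel p r.
Proof.
move=> q_nz /parallel_sym /(parallelP _ q_nz) [a ->] /(parallelP _ q_nz) [b ->].
exact: parallel_scale.
Qed.

Lemma det3_eq0_parallel p p' q r :
  p != 0 -> parallel p p' -> det3 p q r = 0 -> det3 p' q r = 0.
Proof.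
move=> p_nz /(parallelP _ p_nz) [a ->] det_0.
by rewrite -[q]scale1r -[r]scale1r det3_scale det_0 mulr0.
Qed.

Lemma det3_neq0_nparallel x y z :
  det3 x y z != 0 -> [/\ ~~ parallel x y, ~~ parallel y z & ~~ parallel x z].
Proof.
move=> det_nz; split; apply/negP => par; move/eqP: det_nz; apply.
- by rewrite -det3_cycle parallel_det3.
- exact: parallel_det3.
- by rewrite det3_cycle det3_swap parallel_det3 ?oppr0.
Qed.

Lemma nparallel_sym p q : ~~ parallel p q -> ~~ parallel q p.
Proof. by apply: contraNN; apply: parallel_sym. Qed.

Lemma nparallel_neq0 p q : ~~ parallel p q -> p != 0 /\ q != 0.
Proof.
move=> npar; split; apply: contraNN npar => /eqP ->;
  by rewrite /parallel /cross0 /cross1 /cross2 /v0 /v1 /v2 !mxE !(mul0r, mulr0, subr0) eqxx.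
Qed.

Lemma det3_neq0_neq0 x y z : det3 x y z != 0 -> x != 0.
Proof. by apply: contraNN => /eqP ->; rewrite /det3 /v0 /v1 /v2 !mxE !mul0r !addr0. Qed.

Lemma sub_lineP x p q : reflect (exists a b, x = a *: p + b *: q) (x <= <<p>> + <<q>>)%MS.
Proof.
apply: (iffP idP).
- case/sub_addsmxP => [[u v] /= ->].
  have /sub_rVP [a ->] : (u *m <<p>> <= p)%MS by rewrite (submx_trans (submxMl _ _)) ?genmxE.
  have /sub_rVP [b ->] : (v *m <<q>> <= q)%MS by rewrite (submx_trans (submxMl _ _)) ?genmxE.
  by exists a, b.
- by case=> a [b ->]; apply: addmx_sub_adds; rewrite genmxE scalemx_sub.
Qed.

Lemma sub_line_det3 x p q : ~~ parallel p q -> (x <= <<p>> + <<q>>)%MS = (det3 x p q == 0).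
Proof.
move=> npar; apply/idP/idP.
  by case/sub_lineP => a [b ->]; rewrite det3_linear det3_dup12 det3_dup13 !mulr0 addr0.
move=> /eqP det_0; apply/sub_lineP.
pose N := cross0 p q ^+ 2 + cross1 p q ^+ 2 + cross2 p q ^+ 2.
have N_nz : N != 0.
  apply: contraNN npar; rewrite /N => /eqP N0.
  have e0 : cross0 p q = 0 by nra.
  have e1 : cross1 p q = 0 by nra.
  have e2 : cross2 p q = 0 by nra.
  by rewrite /parallel e0 e1 e2 eqxx.
(* With [n = cross p q], [N x = (n.(cross x q)) p + (n.(cross p x)) q + (det3 x p q) n]. *)
pose a := cross0 p q * cross0 x q + cross1 p q * cross1 x q + cross2 p q * cross2 x q.
pose b := cross0 p q * cross0 p x + cross1 p q * cross1 p x + cross2 p q * cross2 p x.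
have det_0' c : c * det3 x p q = 0 by rewrite det_0 mulr0.
exists (a / N), (b / N); apply: row3P;
  rewrite !coordE mulrAC [b / N * _]mulrAC -mulrDl; apply: (canRL (mulfK N_nz));
  rewrite -[RHS]addr0;
  [rewrite -(det_0' (cross0 p q)) | rewrite -(det_0' (cross1 p q))
  | rewrite -(det_0' (cross2 p q))];
  rewrite /N /a /b; det3_ring.
Qed.

Lemma rank_line p q : ~~ parallel p q -> \rank (<<p>> + <<q>>)%MS = 2.
Proof.
move=> npar; have [p_nz q_nz] := nparallel_neq0 npar.
have ltpq : (<<p>> < <<p>> + <<q>>)%MS.
  rewrite ltmxE addsmxSl /=; apply: contra npar => sub_qp.
  have sub_q : (q <= <<q>>)%MS by rewrite genmxE.
  rewrite parallel_sub // -(genmxE p).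
  exact: submx_trans sub_q (submx_trans (addsmxSr _ _) sub_qp).
apply/eqP; rewrite eqn_leq; apply/andP; split.
  by rewrite (leq_trans (mxrank_adds_leqif _ _).1) // !genmxE !rank_rV p_nz q_nz.
by have := rank_ltmx ltpq; rewrite genmxE rank_rV p_nz.
Qed.

Lemma rank_plane p q r : det3 p q r != 0 -> \rank (<<p>> + <<q>> + <<r>>)%MS = 3.
Proof.
move=> det_nz; have [npq _ _] := det3_neq0_nparallel det_nz.
have lt_line : (<<p>> + <<q>> < <<p>> + <<q>> + <<r>>)%MS.
  rewrite ltmxE addsmxSl /=; apply: contra det_nz => sub_r.
  have sub_r' : (r <= <<r>>)%MS by rewrite genmxE.
  rewrite -det3_cycle -sub_line_det3 //.
  have sub_rr : (<<r>> <= <<p>> + <<q>>)%MS := submx_trans (addsmxSr _ _) sub_r.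
  exact: submx_trans sub_r' sub_rr.
apply/eqP; rewrite eqn_leq rank_leq_col /=.
by have := rank_ltmx lt_line; rewrite rank_line.
Qed.

Lemma det3_on_line p q x y z : ~~ parallel p q ->
  det3 x p q = 0 -> det3 y p q = 0 -> det3 z p q = 0 -> det3 x y z = 0.
Proof.
move=> npq x_pq y_pq z_pq; apply/eqP; apply: contraT => det_nz.
have : (<<x>> + <<y>> + <<z>> <= <<p>> + <<q>>)%MS.
  by rewrite !addsmx_sub !genmxE !sub_line_det3 // x_pq y_pq z_pq eqxx.
by move/mxrankS; rewrite rank_plane // rank_line.
Qed.

Lemma line_incidence_eq p q r s : ~~ parallel p q -> ~~ parallel r s ->
  det3 p r s = 0 -> det3 q r s = 0 -> forall x, det3 x p q = 0 <-> det3 x r s = 0.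
Proof.
move=> npq nrs p_rs q_rs x; split => x_line; last exact: (det3_on_line nrs).
apply: (det3_on_line npq) => //; apply: (det3_on_line nrs) => //;
  [apply: det3_dup12 | apply: det3_dup13].
Qed.

Lemma parallel_of_two_lines p q r s x y : ~~ parallel p q -> ~~ parallel r s ->
  ~ (det3 r p q = 0 /\ det3 s p q = 0) ->
  det3 x p q = 0 -> det3 y p q = 0 -> det3 x r s = 0 -> det3 y r s = 0 -> parallel x y.
Proof.
move=> npq nrs lines_neq x_pq y_pq x_rs y_rs; apply: contraT => nxy; case: lines_neq.
have E1 := line_incidence_eq nxy npq x_pq y_pq.
have E2 := line_incidence_eq nxy nrs x_rs y_rs.
by split; apply/E1/E2; [apply: det3_dup12 | apply: det3_dup13].
Qed.

(* By [det3_cramer], [z] has coordinates [(det3 z q r, det3 p z r, det3 p q z)] in the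
   frame [p q r]; dropping the [q]-coordinate projects [z] from [q] onto the line [p r]. *)
Lemma cramer_meet_parallel p q r z x : det3 p q r != 0 -> det3 z q r != 0 ->
  det3 x p r = 0 -> det3 x z q = 0 -> parallel (det3 z q r *: p + det3 p q z *: r) x.
Proof.
move=> det_nz al_nz x_pr x_zq; have [_ _ npr] := det3_neq0_nparallel det_nz.
have [nzq _ _] := det3_neq0_nparallel al_nz.
apply: (parallel_of_two_lines npr nzq) => //.
- by case=> _ /eqP; rewrite det3_cycle det3_swap oppr_eq0 (negbTE det_nz).
- by rewrite det3_linear det3_dup12 det3_dup13 !mulr0 addr0.
- by det3_ring.
Qed.

Definition frame_mx p q r : 'M[R]_3 := \matrix_(i < 3, j < 3) [:: p; q; r]`_i 0 j.

Lemma row_frame i p q r : row i (frame_mx p q r) = [:: p; q; r]`_i.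
Proof. by apply/rowP => j; rewrite !mxE. Qed.

Lemma det3_frame p q r : det3 p q r = \det (frame_mx p q r).
Proof. by rewrite det_mx33 !mxE. Qed.

Lemma mulmx_frame x p q r : x *m frame_mx p q r = v0 x *: p + v1 x *: q + v2 x *: r.
Proof. by apply: row3P; rewrite !coordE /v0 /v1 /v2 !mxE sum_ord3 !mxE. Qed.

Lemma det3_mulmx x y z (M : 'M[R]_3) :
  det3 (x *m M) (y *m M) (z *m M) = det3 x y z * \det M.
Proof.
rewrite !det3_frame -det_mulmx; congr (\det _); apply/row_matrixP => i.
by rewrite row_mul !row_frame; case: (ord3P i) => ->.
Qed.

Lemma frame_mx_unit p q r : det3 p q r != 0 -> frame_mx p q r \in unitmx.
Proof. by rewrite unitmxE unitfE -det3_frame. Qed.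

End TripleProduct.

Ltac det3_perm h := first
  [ exact h | exact: det3_eq0_cycle h | exact: det3_eq0_cycle (det3_eq0_cycle h)
  | exact: det3_eq0_swap h | exact: det3_eq0_swap (det3_eq0_cycle h)
  | exact: det3_eq0_swap (det3_eq0_cycle (det3_eq0_cycle h)) ].
Ltac det3_dup := first [apply: det3_dup12 | apply: det3_dup13 | apply: det3_dup23].

Lemma uniq_size_ord n (s : seq 'I_n) : uniq s -> (size s <= n)%N.
Proof.
move=> s_uniq; rewrite -[X in (_ <= X)%N](size_enum_ord n).
by apply: uniq_leq_size => // x; rewrite mem_enum.
Qed.

Lemma uniq_ord_full n (s : seq 'I_n) : uniq s -> (n <= size s)%N -> forall x, x \in s.
Proof.
move=> s_uniq le_ns x.
have sub : {subset s <= enum 'I_n} by move=> y _; rewrite mem_enum.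
have [|_ ->] := uniq_min_size s_uniq sub; last by rewrite mem_enum.
by rewrite size_enum_ord.
Qed.

Lemma perm_of_uniq (s : seq 'I_6) : uniq s -> size s = 6 ->
  exists g : 'S_6, forall k, g k = nth ord0 s k.
Proof.
move=> s_uniq size_s.
have nth_inj : injective (fun k : 'I_6 => nth ord0 s k).
  by move=> x y /eqP; rewrite nth_uniq ?size_s // => /eqP; apply: val_inj.
by exists (perm nth_inj) => k; rewrite permE.
Qed.

Lemma mem_seq6 (T : eqType) (x a b c d e f : T) : x \in [:: a; b; c; d; e; f] ->
  x = a \/ x = b \/ x = c \/ x = d \/ x = e \/ x = f.
Proof.
by rewrite !inE => /orP [/eqP->|/orP [/eqP->|/orP [/eqP->|/orP [/eqP->|/orP [/eqP->|/eqP->]]]]];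
  auto 10.
Qed.

Ltac neq_from_nparallel := match goal with
  | H : is_true (~~ parallel (?A ?x) (?A ?y)) |- is_true (?x != ?y) =>
      apply: (contraNneq _ H) => ->; exact: parallel_refl
  | H : is_true (~~ parallel (?A ?y) (?A ?x)) |- is_true (?x != ?y) =>
      apply: (contraNneq _ H) => ->; exact: parallel_refl
  end.
Ltac solve_uniq := rewrite /= !inE !negb_or; do !(apply/andP; split); try done;
  first [rewrite eq_sym; assumption | neq_from_nparallel].

Definition locked_by (R : realFieldType) n (A : 'I_n -> 'rV[R]_3) (i j1 k1 j2 k2 : 'I_n) :=
  [/\ [/\ j1 != i, k1 != i, j2 != i & k2 != i],
      ~~ parallel (A j1) (A k1), ~~ parallel (A j2) (A k2),
      det3 (A i) (A j1) (A k1) = 0 /\ det3 (A i) (A j2) (A k2) = 0 &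
      ~ (det3 (A j2) (A j1) (A k1) = 0 /\ det3 (A k2) (A j1) (A k1) = 0)].

Definition simple (R : realFieldType) n (A : 'I_n -> 'rV[R]_3) (i : 'I_n) :=
  forall j, j != i -> ~~ parallel (A i) (A j).

Section Locking.
Variables (R : realFieldType) (n : nat) (A : 'I_n -> 'rV[R]_3).
Hypothesis A_nz : forall i, A i != 0.
Local Notation P i j := (parallel (A i) (A j)).
Local Notation L i j k := (det3 (A i) (A j) (A k) = 0).

Lemma parallel_transA i j k : P i j -> P j k -> P i k.
Proof. exact: parallel_trans (A_nz j). Qed.

Lemma det3_eq0_parallelA i i' j k : P i i' -> L i j k -> L i' j k.
Proof. exact: det3_eq0_parallel (A_nz i). Qed.

Lemma line_incidence_eqA a b c d :
  ~~ P a b -> ~~ P c d -> L a c d -> L b c d -> forall x, L x a b <-> L x c d.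
Proof. by move=> nab ncd acd bcd x; apply: line_incidence_eq. Qed.

Lemma nparallel_classes a b a' b' : ~~ P a b -> P a a' -> P b b' ->
  [/\ ~~ P a' b, ~~ P a b' & ~~ P a' b'].
Proof.
move=> nab aa' bb'; have np x y : P a x -> P b y -> ~~ P x y.
  move=> ax bY; apply: contra nab => xy.
  exact: parallel_transA ax (parallel_transA xy (parallel_sym bY)).
by split; apply: np => //; apply: parallel_refl.
Qed.

Lemma locked_by_swap1 i j1 k1 j2 k2 : locked_by A i j1 k1 j2 k2 -> locked_by A i k1 j1 j2 k2.
Proof.
case=> [[? ? ? ?] n1 n2 [l1 l2] lines_neq]; split => //; first exact: nparallel_sym.
  by split => //; det3_perm l1.
by case=> h1 h2; apply: lines_neq; split; [det3_perm h1 | det3_perm h2].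
Qed.

Lemma locked_by_swap2 i j1 k1 j2 k2 : locked_by A i j1 k1 j2 k2 -> locked_by A i j1 k1 k2 j2.
Proof.
case=> [[? ? ? ?] n1 n2 [l1 l2] lines_neq]; split => //; first exact: nparallel_sym.
  by split => //; det3_perm l2.
by case=> h1 h2; apply: lines_neq.
Qed.

Lemma locked_by_swap i j1 k1 j2 k2 : locked_by A i j1 k1 j2 k2 -> locked_by A i j2 k2 j1 k1.
Proof.
case=> [[? ? ? ?] n1 n2 [l1 l2] lines_neq]; split => //.
case=> h1 h2; apply: lines_neq.
have E := line_incidence_eqA n1 n2 h1 h2.
by split; apply/E; det3_dup.
Qed.

Lemma locked_by_off_line i j1 k1 j2 k2 :
  locked_by A i j1 k1 j2 k2 -> ~~ P i j2 -> ~ L j2 j1 k1.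
Proof.
move=> [_ n1 n2 [l1 l2] lines_neq] nij2 j2_on1; apply: lines_neq; split => //.
have E1 := line_incidence_eqA nij2 n1 l1 j2_on1.
have E2 : forall x, L x i j2 <-> L x j2 k2 by apply: line_incidence_eqA => //; det3_dup.
by apply/E1/E2; det3_dup.
Qed.

Lemma locked_by_simple_nparallel i j1 k1 j2 k2 :
  simple A i -> locked_by A i j1 k1 j2 k2 -> ~~ P j1 j2.
Proof.
move=> si lk; have [[? ? ? ?] n1 n2 [l1 l2] lines_neq] := lk.
apply/negP => p12; have nij1 : ~~ P i j1 by apply: si.
have E1 : forall x, L x i j1 <-> L x j1 k1 by apply: line_incidence_eqA => //; det3_dup.
have E2 : forall x, L x i j1 <-> L x j2 k2.
  by apply: line_incidence_eqA => //; rewrite -det3_cycle parallel_det3.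
by apply: lines_neq; split; apply/E1/E2; det3_dup.
Qed.

Lemma locked_by_simple_distinct i j1 k1 j2 k2 : simple A i -> locked_by A i j1 k1 j2 k2 ->
  [/\ [/\ ~~ P i j1, ~~ P i k1, ~~ P i j2 & ~~ P i k2],
      [/\ ~~ P j1 k1, ~~ P j1 j2 & ~~ P j1 k2],
      [/\ ~~ P k1 j2 & ~~ P k1 k2] & ~~ P j2 k2].
Proof.
move=> si lk; have [[? ? ? ?] n1 n2 _ _] := lk.
split; [by split; apply: si | split | split | by []] => //.
- exact: locked_by_simple_nparallel lk.
- exact: locked_by_simple_nparallel (locked_by_swap2 lk).
- exact: locked_by_simple_nparallel (locked_by_swap1 lk).
- exact: locked_by_simple_nparallel (locked_by_swap2 (locked_by_swap1 lk)).
Qed.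

Lemma line_share2 x y u v :
  ~~ P x u -> ~~ P x y -> ~~ P u v -> L u x y -> L x u v -> L y u v.
Proof.
move=> nxu nxy nuv u_xy x_uv.
have E1 : forall t, L t x u <-> L t u v by apply: line_incidence_eqA => //; det3_dup.
have E2 : forall t, L t x u <-> L t x y by apply: line_incidence_eqA => //; det3_dup.
by apply/E1/E2; det3_dup.
Qed.

Section FivePoints.
Variables i j1 k1 j2 k2 : 'I_n.
Hypotheses (si : simple A i) (sj1 : simple A j1) (lk : locked_by A i j1 k1 j2 k2).
Hypothesis cover5 : forall t, P t i \/ P t j1 \/ P t k1 \/ P t j2 \/ P t k2.

(* Off the line [i j1 k1] there are only the classes of [j2] and [k2], and a
   line through [j1] meeting both of them would put [j1] on the line [j2 k2]. *)
Lemma five_classes_line x y : x != j1 -> y != j1 -> ~~ P x y -> L j1 x y ->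
  L x j1 k1 /\ L y j1 k1.
Proof.
move=> xj yj nxy j1_xy; have [[j1i _ _ _] n1 _ [l1 _] _] := lk.
have nxj : ~~ P x j1 by apply: nparallel_sym; apply: sj1.
have nyj : ~~ P y j1 by apply: nparallel_sym; apply: sj1.
have [x_on|x_off] := eqVneq (det3 (A x) (A j1) (A k1)) 0.
  by split => //; apply: line_share2 nxj nxy n1 j1_xy x_on.
have [y_on|y_off] := eqVneq (det3 (A y) (A j1) (A k1)) 0.
  move/eqP: x_off; case; apply: line_share2 nyj (nparallel_sym nxy) n1 _ y_on.
  by det3_perm j1_xy.
have off_class t : t != j1 -> det3 (A t) (A j1) (A k1) != 0 -> P t j2 \/ P t k2.
  move=> tj /eqP t_off.
  case: (cover5 t) => [ti|[tj1|[tk1|[tj2|tk2]]]]; [exfalso.. | by left | by right].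
  - by apply: t_off; apply: det3_eq0_parallelA (parallel_sym ti) l1.
  - by move/negP: (sj1 tj); apply; apply: parallel_sym.
  - by apply: t_off; apply: det3_eq0_parallelA (parallel_sym tk1) (det3_dup13 _ _).
have j1_on2 : L j1 j2 k2.
  have [xj2|xk2] := off_class x xj x_off; have [yj2|yk2] := off_class y yj y_off.
  - by case/negP: nxy; apply: parallel_transA xj2 (parallel_sym yj2).
  - have j2_j1y : L j2 j1 y by apply: det3_eq0_parallelA xj2 _; det3_perm j1_xy.
    have := det3_eq0_parallelA yk2 (det3_eq0_cycle (det3_eq0_cycle j2_j1y)).
    by move=> k2_j2j1; det3_perm k2_j2j1.
  - have k2_j1y : L k2 j1 y by apply: det3_eq0_parallelA xk2 _; det3_perm j1_xy.
    have := det3_eq0_parallelA yj2 (det3_eq0_cycle (det3_eq0_cycle k2_j1y)).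
    by move=> j2_k2j1; det3_perm j2_k2j1.
  - by case/negP: nxy; apply: parallel_transA xk2 (parallel_sym yk2).
by case: (locked_by_off_line (locked_by_swap lk) (si j1i) j1_on2).
Qed.

Lemma five_classes_not_locked : ~ exists x1 y1 x2 y2, locked_by A j1 x1 y1 x2 y2.
Proof.
case=> [x1 [y1 [x2 [y2 [[x1j y1j x2j y2j] m1 m2 [h1 h2] lines_neq]]]]].
have [_ n1 _ _ _] := lk.
have [x1_on y1_on] := five_classes_line x1j y1j m1 h1.
have [x2_on y2_on] := five_classes_line x2j y2j m2 h2.
have E := line_incidence_eqA m1 n1 x1_on y1_on.
by apply: lines_neq; split; apply/E.
Qed.

End FivePoints.

Lemma not_locked_two_off_line j1 k1 j2 k2 : ~~ P j1 k1 -> ~~ P j2 k2 -> ~ L j2 j1 k1 ->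
  (forall u, u != j2 -> u != k2 -> L u j1 k1) ->
  ~ exists x1 y1 x2 y2, locked_by A j2 x1 y1 x2 y2.
Proof.
move=> n1 n2 j2_off on1 [x1 [y1 [x2 [y2 [[x1j y1j x2j y2j] m1 m2 [h1 h2] lines_neq]]]]].
have k2_on u v : u != j2 -> v != j2 -> ~~ P u v -> L j2 u v -> L k2 u v.
  move=> uj vj nuv j2_uv.
  have [->|uk] := eqVneq u k2; first by det3_dup.
  have [->|vk] := eqVneq v k2; first by det3_dup.
  by case: j2_off; apply/(line_incidence_eqA nuv n1 (on1 u uj uk) (on1 v vj vk)).
have E1 := line_incidence_eqA n2 m1 h1 (k2_on _ _ x1j y1j m1 h1).
have E2 := line_incidence_eqA n2 m2 h2 (k2_on _ _ x2j y2j m2 h2).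
by apply: lines_neq; split; apply/E1/E2; det3_dup.
Qed.

(* The six points of configuration (ii), numbered as in [config_ii]: the four
   lines [q0 q1 q4], [q0 q2 q5], [q2 q3 q4], [q1 q3 q5], and the projective
   frame [q4 q5 q0 q3]. *)
Definition quadrilateral (q0 q1 q2 q3 q4 q5 : 'I_n) :=
  [/\ uniq [:: q0; q1; q2; q3; q4; q5],
      L q0 q1 q4 /\ L q0 q2 q5, L q2 q3 q4 /\ L q1 q3 q5,
      det3 (A q4) (A q5) (A q0) != 0 /\ det3 (A q3) (A q5) (A q0) != 0 &
      det3 (A q4) (A q3) (A q0) != 0 /\ det3 (A q4) (A q5) (A q3) != 0].

Section SixPoints.
Variables i j1 k1 j2 k2 z : 'I_n.
Hypothesis simpleA : forall t, simple A t.
Hypothesis cover6 : forall t, t = i \/ t = j1 \/ t = k1 \/ t = j2 \/ t = k2 \/ t = z.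
Hypothesis uniq6 : uniq [:: i; j1; k1; j2; k2; z].
Hypothesis lk : locked_by A i j1 k1 j2 k2.
Hypothesis lockedA : forall t, exists x1 y1 x2 y2, locked_by A t x1 y1 x2 y2.

Lemma nparallel_of_neq x y : x != y -> ~~ P x y.
Proof. by move=> xy; apply: simpleA; rewrite eq_sym. Qed.

Lemma six_neq : [/\ [/\ i != j1, i != k1, i != j2, i != k2 & i != z],
  [/\ j1 != k1, j1 != j2, j1 != k2 & j1 != z], [/\ k1 != j2, k1 != k2 & k1 != z],
  j2 != k2 /\ j2 != z & k2 != z].
Proof.
move: uniq6; rewrite /= !inE !negb_or.
case/and5P => /and5P [? ? ? ? ?] /and4P [? ? ? ?] /and3P [? ? ?] /andP [? ?] /andP [? _].
by split => //; split.
Qed.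

Lemma sixth_off_locking_lines : ~ L z j1 k1 /\ ~ L z j2 k2.
Proof.
have [[ij1 ik1 ij2 ik2 iz] [j1k1 j1j2 j1k2 j1z] [k1j2 k1k2 k1z] [j2k2 j2z] k2z] := six_neq.
have [_ n1 n2 [l1 l2] _] := lk.
split => z_on.
- apply: (not_locked_two_off_line n1 n2 _ _ (lockedA j2)).
    exact: locked_by_off_line lk (nparallel_of_neq ij2).
  move=> u uj uk; case: (cover6 u) => [|[|[|[|[|]]]]] eu; subst u;
    first [exact: l1 | exact: z_on | det3_dup | by rewrite eqxx in uj | by rewrite eqxx in uk].
- apply: (not_locked_two_off_line n2 n1 _ _ (lockedA j1)).
    exact: locked_by_off_line (locked_by_swap lk) (nparallel_of_neq ij1).
  move=> u uj uk; case: (cover6 u) => [|[|[|[|[|]]]]] eu; subst u;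
    first [exact: l2 | exact: z_on | det3_dup | by rewrite eqxx in uj | by rewrite eqxx in uk].
Qed.

Lemma sixth_line_spanned x y : x != z -> y != z -> ~~ P x y -> L z x y ->
  exists a b, [/\ a = j1 \/ a = k1, b = j2 \/ b = k2, L z a b, L a x y & L b x y].
Proof.
move=> xz yz nxy z_xy.
have [_ n1 n2 [l1 l2] _] := lk.
have [z_off1 z_off2] := sixth_off_locking_lines.
have off1 : L x j1 k1 -> L y j1 k1 -> False.
  by move=> x_on y_on; apply/z_off1/(line_incidence_eqA nxy n1 x_on y_on).
have off2 : L x j2 k2 -> L y j2 k2 -> False.
  by move=> x_on y_on; apply/z_off2/(line_incidence_eqA nxy n2 x_on y_on).
case: (cover6 x) => [|[|[|[|[|]]]]] ex; subst x; case: (cover6 y) => [|[|[|[|[|]]]]] ey; subst y;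
  first [ by rewrite eqxx in yz | by rewrite eqxx in xz | by rewrite parallel_refl in nxy
        | by case: off1; first [exact: l1 | det3_dup] | by case: off2; first [exact: l2 | det3_dup]
        | (exists j1, j2 + exists j1, k2 + exists k1, j2 + exists k1, k2);
          split; by [left | right | det3_perm z_xy | det3_dup] ].
Qed.

Lemma sixth_on_cross_lines : exists u w,
  [/\ (u = j2 /\ w = k2) \/ (u = k2 /\ w = j2), L z k1 u & L z j1 w].
Proof.
have [x1 [y1 [x2 [y2 [[x1z y1z x2z y2z] m1 m2 [h1 h2] lines_neq]]]]] := lockedA z.
have [a1 [b1 [ea1 eb1 z_ab1 a1_on b1_on]]] := sixth_line_spanned x1z y1z m1 h1.
have [a2 [b2 [ea2 eb2 z_ab2 a2_on b2_on]]] := sixth_line_spanned x2z y2z m2 h2.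
have [[_ _ _ _ iz] [_ _ _ j1z] [_ _ k1z] [_ j2z] k2z] := six_neq.
have common t : t != z -> L t x1 y1 -> L t x2 y2 -> False.
  move=> tz t1 t2; have nzt : ~~ P z t by apply: nparallel_of_neq; rewrite eq_sym.
  have E1 := line_incidence_eqA nzt m1 h1 t1.
  have E2 := line_incidence_eqA nzt m2 h2 t2.
  by apply: lines_neq; split; apply/E1/E2; det3_dup.
have a12 : a1 != a2.
  by apply/eqP => ea; subst a2; apply: (common a1) => //; case: ea1 => ->.
have b12 : b1 != b2.
  by apply/eqP => eb; subst b2; apply: (common b1) => //; case: eb1 => ->.
case: ea1 => ?; case: ea2 => ?; case: eb1 => ?; case: eb2 => ?; subst a1 a2 b1 b2;
  first [ by rewrite eqxx in a12 | by rewrite eqxx in b12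
        | (exists j2, k2 + exists k2, j2);
          split; by [left | right | det3_perm z_ab1 | det3_perm z_ab2] ].
Qed.

Lemma six_simple_quadrilateral : exists u w, quadrilateral i j1 u z k1 w.
Proof.
have [[ij1 ik1 ij2 ik2 iz] [j1k1 j1j2 j1k2 j1z] [k1j2 k1k2 k1z] [j2k2 j2z] k2z] := six_neq.
have [_ n1 n2 [l1 l2] _] := lk.
have [z_off1 z_off2] := sixth_off_locking_lines.
have [u [w [euw z_k1u z_j1w]]] := sixth_on_cross_lines.
have [[ui uj1 uk1 uz] [wi wj1 wk1 wz] uw] :
    [/\ [/\ u != i, u != j1, u != k1 & u != z], [/\ w != i, w != j1, w != k1 & w != z] & u != w].
  by case: euw => [[-> ->]|[-> ->]]; do !split; rewrite // eq_sym.
have E1 : forall t, L t i k1 <-> L t j1 k1.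
  exact: line_incidence_eqA (nparallel_of_neq ik1) n1 l1 (det3_dup13 _ _).
have E2 : forall t, L t i w <-> L t j2 k2.
  apply: line_incidence_eqA (nparallel_sym (nparallel_of_neq wi)) n2 l2 _.
  by case: euw => [[_ ->]|[_ ->]]; det3_dup.
have w_off1 : ~ L w j1 k1.
  case: euw => [[_ ->]|[_ ->]].
  - exact: locked_by_off_line (locked_by_swap2 lk) (nparallel_of_neq ik2).
  - exact: locked_by_off_line lk (nparallel_of_neq ij2).
exists u, w; split.
- by solve_uniq.
- by split=> //; case: euw => [[-> ->]|[-> ->]]; det3_perm l2.
- by split; [det3_perm z_k1u | det3_perm z_j1w].
- split; apply/eqP => degenerate.
  + by apply: w_off1; apply/E1; det3_perm degenerate.
  + by apply: z_off2; apply/E2; det3_perm degenerate.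
- split; apply/eqP => degenerate.
  + by apply: z_off1; apply/E1; det3_perm degenerate.
  + have E := line_incidence_eqA n1 (nparallel_of_neq wz) (det3_eq0_cycle z_j1w) degenerate.
    by apply: z_off1; apply/E; det3_dup.
Qed.

End SixPoints.

Definition doubled_triangle (a a' b b' c c' : 'I_n) :=
  [/\ uniq [:: a; a'; b; b'; c; c'], P a a', P b b', P c c' & det3 (A a) (A b) (A c) != 0].

Lemma twins_doubled_triangle a b c : (forall t, exists2 t', t' != t & P t t') ->
  det3 (A a) (A b) (A c) != 0 -> exists a' b' c', doubled_triangle a a' b b' c c'.
Proof.
move=> twin det_nz; have [a' a'a aa'] := twin a; have [b' b'b bb'] := twin b.
have [c' c'c cc'] := twin c; exists a', b', c'; split => //.
have [nab nbc nac] := det3_neq0_nparallel det_nz.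
have [? ? ?] := nparallel_classes nab aa' bb'.
have [? ? ?] := nparallel_classes nbc bb' cc'.
have [? ? ?] := nparallel_classes nac aa' cc'.
by solve_uniq.
Qed.

Section SmallConfigurations.
Hypothesis n_le6 : (n <= 6)%N.
Hypothesis lockedA : forall t, exists x1 y1 x2 y2, locked_by A t x1 y1 x2 y2.
Variables i j1 k1 j2 k2 : 'I_n.
Hypotheses (si : simple A i) (lk : locked_by A i j1 k1 j2 k2).

Lemma no_five_classes :
  ~ forall t, P t i \/ P t j1 \/ P t k1 \/ P t j2 \/ P t k2.
Proof.
move=> cover5.
have [[ij1 ik1 ij2 ik2] [j1k1 j1j2 j1k2] [k1j2 k1k2] j2k2] := locked_by_simple_distinct si lk.
have [y /andP [yj1 j1y]|j1_simple] := pickP [pred y | (y != j1) && P j1 y].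
  (* A copy [y] of [j1] and a copy [y'] of [k1] would make seven points. *)
  have k1_simple : simple A k1.
    move=> y' y'k1; apply/negP => k1y'.
    have [? _ _] := nparallel_classes (nparallel_sym ij1) j1y (parallel_refl _).
    have [? _ _] := nparallel_classes j1j2 j1y (parallel_refl _).
    have [? _ _] := nparallel_classes j1k2 j1y (parallel_refl _).
    have [_ ? _] := nparallel_classes ik1 (parallel_refl _) k1y'.
    have [? _ _] := nparallel_classes k1j2 k1y' (parallel_refl _).
    have [? _ _] := nparallel_classes k1k2 k1y' (parallel_refl _).
    have [? ? ?] := nparallel_classes j1k1 j1y k1y'.
    have uniq7 : uniq [:: i; j1; k1; j2; k2; y; y'] by solve_uniq.
    by have := leq_trans (uniq_size_ord uniq7) n_le6.
  apply: (five_classes_not_locked si k1_simple (locked_by_swap1 lk)) (lockedA k1).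
  by move=> t; case: (cover5 t) => [|[|[|[|]]]]; tauto.
have sj1 : simple A j1 by move=> y yj1; apply/negP => j1y; move: (j1_simple y); rewrite /= yj1 j1y.
exact: (five_classes_not_locked si sj1 lk cover5) (lockedA j1).
Qed.

Lemma sixth_point_quadrilateral z :
  [&& ~~ P z i, ~~ P z j1, ~~ P z k1, ~~ P z j2 & ~~ P z k2] ->
  exists q0 q1 q2 q3 q4 q5, quadrilateral q0 q1 q2 q3 q4 q5.
Proof.
case/and5P => zi zj1 zk1 zj2 zk2.
have [[ij1 ik1 ij2 ik2] [j1k1 j1j2 j1k2] [k1j2 k1k2] j2k2] := locked_by_simple_distinct si lk.
have uniq6 : uniq [:: i; j1; k1; j2; k2; z] by solve_uniq.
have cover6 t : t = i \/ t = j1 \/ t = k1 \/ t = j2 \/ t = k2 \/ t = z.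
  exact: mem_seq6 (uniq_ord_full uniq6 n_le6 t).
have simpleA t : simple A t.
  move=> u ut; case: (cover6 t) => [|[|[|[|[|]]]]] et; case: (cover6 u) => [|[|[|[|[|]]]]] eu;
    subst t u; first [by rewrite eqxx in ut | assumption | exact: nparallel_sym].
have [u [w quad]] := six_simple_quadrilateral simpleA cover6 uniq6 lk lockedA.
by exists i, j1, u, z, k1, w.
Qed.

End SmallConfigurations.

Lemma small_rigid_shape : (n <= 6)%N -> (exists a b c, det3 (A a) (A b) (A c) != 0) ->
  (forall t, exists x1 y1 x2 y2, locked_by A t x1 y1 x2 y2) ->
  (exists a a' b b' c c', doubled_triangle a a' b b' c c') \/
  (exists q0 q1 q2 q3 q4 q5, quadrilateral q0 q1 q2 q3 q4 q5).
Proof.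
move=> n_le6 [a [b [c det_nz]]] lockedA.
have [twin|] := boolP [forall t, [exists t', (t' != t) && P t t']].
  left; have [|a' [b' [c' tri]]] := twins_doubled_triangle _ det_nz.
    by move=> t; have /existsP [t' /andP [t't tt']] := forallP twin t; exists t'.
  by exists a, a', b, b', c, c'.
rewrite negb_forall => /existsP [i]; rewrite negb_exists => /forallP no_twin.
have si : simple A i by move=> j ji; move: (no_twin j); rewrite ji.
have [j1 [k1 [j2 [k2 lk]]]] := lockedA i.
have [z z_new|cover5] :=
  pickP [pred z | [&& ~~ P z i, ~~ P z j1, ~~ P z k1, ~~ P z j2 & ~~ P z k2]].
  by right; apply: sixth_point_quadrilateral z_new.
exfalso; apply: (no_five_classes n_le6 lockedA si lk) => t.
move: (cover5 t) => /=; case: (P t i); first by left.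
case: (P t j1); first by right; left.
case: (P t k1); first by right; right; left.
by case: (P t j2); [do 3 right; left | case: (P t k2); first do 4 right].
Qed.

End Locking.

Section Incidence.
Variables (R : realType) (n : nat) (A : 'I_n -> 'rV[R]_3).
Hypothesis A_nz : is_config A.

Lemma spanS_sub (S : {set 'I_n}) m (M : 'M[R]_(m, 3)) :
  (forall k, k \in S -> (A k <= M)%MS) -> (spanS A S <= M)%MS.
Proof. by move=> sub_M; apply/sumsmx_subP => k kS; rewrite genmxE sub_M. Qed.

Lemma sub_spanS (S : {set 'I_n}) k : k \in S -> (<<A k>> <= spanS A S)%MS.
Proof. by move=> kS; apply: (sumsmx_sup k). Qed.

Lemma spanS_pair j k : (spanS A [set j; k] == <<A j>> + <<A k>>)%MS.
Proof.
apply/andP; split; last by rewrite addsmx_sub !sub_spanS // !inE eqxx ?orbT.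
apply: spanS_sub => x; rewrite !inE => /orP [] /eqP ->; rewrite -genmxE.
  exact: addsmxSl.
exact: addsmxSr.
Qed.

Lemma spanS_nparallel (S : {set 'I_n}) : (1 < \rank (spanS A S))%N ->
  exists j k, [/\ j \in S, k \in S & ~~ parallel (A j) (A k)].
Proof.
move=> rank_gt1; have [j jS|S0] := pickP [in S]; last first.
  by move: rank_gt1; rewrite /spanS big_pred0 ?mxrank0.
have [k /andP [kS k_off]|all_on] := pickP [pred k | (k \in S) && ~~ (A k <= A j)%MS].
  by exists j, k; rewrite parallel_sub.
have : (spanS A S <= A j)%MS.
  by apply: spanS_sub => k kS; move: (all_on k); rewrite /= kS => /negbFE.
by move/mxrankS; rewrite rank_rV A_nz leqNgt rank_gt1.
Qed.

Lemma hyperplane_line i H : in_hyperplanes A [set~ i] H ->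
  exists j k, [/\ j != i, k != i, ~~ parallel (A j) (A k) & (H == <<A j>> + <<A k>>)%MS].
Proof.
case=> S sub_S [/eqmxP eqH rankH].
have rankS : \rank (spanS A S) = 2 by rewrite -eqH.
have [j [k [jS kS njk]]] := spanS_nparallel (eq_leq (esym rankS)).
have sub_line : (<<A j>> + <<A k>> <= spanS A S)%MS by rewrite addsmx_sub !sub_spanS.
have line_S : (<<A j>> + <<A k>> == spanS A S)%MS.
  by rewrite -(mxrank_leqif_eq sub_line) rank_line // rankS.
exists j, k; split => //.
- by move: (subsetP sub_S _ jS); rewrite !inE.
- by move: (subsetP sub_S _ kS); rewrite !inE.
- by apply/eqmxP; apply: eqmx_trans eqH (eqmx_sym (eqmxP line_S)).
Qed.

Lemma line_eq_det3 (p q r s : 'rV[R]_3) : ~~ parallel p q -> ~~ parallel r s ->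
  det3 r p q = 0 -> det3 s p q = 0 -> (<<r>> + <<s>> == <<p>> + <<q>>)%MS.
Proof.
move=> npq nrs r_pq s_pq.
have sub_rs : (<<r>> + <<s>> <= <<p>> + <<q>>)%MS.
  by rewrite addsmx_sub !genmxE !sub_line_det3 // r_pq s_pq eqxx.
by rewrite -(mxrank_leqif_eq sub_rs) !rank_line.
Qed.

Lemma lockedP i : Defs.locked A i <-> exists j1 k1 j2 k2, locked_by A i j1 k1 j2 k2.
Proof.
split.
  case=> H [H_hyp i_on H_neq].
  have [j1 [k1 [j1i k1i n1 /eqmxP eqH1]]] := hyperplane_line (H_hyp ord0).
  have [j2 [k2 [j2i k2i n2 /eqmxP eqH2]]] := hyperplane_line (H_hyp ord_max).
  exists j1, k1, j2, k2; split => //.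
    by split; apply/eqP; rewrite -sub_line_det3 // -?eqH1 -?eqH2 i_on.
  case=> j2_on k2_on; case/negP: (H_neq ord_max ord0 isT); apply/eqmxP.
  exact: eqmx_trans eqH2 (eqmx_trans (eqmxP (line_eq_det3 n1 n2 j2_on k2_on)) (eqmx_sym eqH1)).
case=> [j1 [k1 [j2 [k2 [[j1i k1i j2i k2i] n1 n2 [l1 l2] lines_neq]]]]].
pose H (k : 'I_2) := if k == ord0 then (<<A j1>> + <<A k1>>)%MS else (<<A j2>> + <<A k2>>)%MS.
have hyp_line j k : j != i -> k != i -> ~~ parallel (A j) (A k) ->
    in_hyperplanes A [set~ i] (<<A j>> + <<A k>>)%MS.
  move=> ji ki njk; exists [set j; k]; last first.
    by split; [apply/eqmxP; apply: eqmx_sym; apply/eqmxP/spanS_pair | apply: rank_line].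
  by apply/subsetP => x; rewrite !inE => /orP [] /eqP ->.
have lines_ne : ~~ (<<A j2>> + <<A k2>> <= <<A j1>> + <<A k1>>)%MS.
  by rewrite addsmx_sub !genmxE !sub_line_det3 //; apply/andP => -[/eqP ? /eqP ?]; apply: lines_neq.
have ord2P (x : 'I_2) : x = ord0 \/ x = ord_max.
  by case: x => [[|[|//]] ?]; [left | right]; apply: val_inj.
exists H; split => [k|k|k k'].
- by rewrite /H; case: ifP => _; apply: hyp_line.
- by rewrite /H; case: ifP => _; rewrite sub_line_det3 // ?l1 ?l2.
- case: (ord2P k) (ord2P k') => -> [] -> //= _; rewrite /H /=.
    by rewrite (negbTE lines_ne) andbF.
  by rewrite (negbTE lines_ne).
Qed.

Lemma nondegenerateP : Defs.nondegenerate A <-> exists i j k, det3 (A i) (A j) (A k) != 0.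
Proof.
split => [rank3|[i [j [k det_nz]]]]; last first.
  have sub_plane : (<<A i>> + <<A j>> + <<A k>> <= spanS A setT)%MS.
    by rewrite !addsmx_sub !sub_spanS ?inE.
  apply/eqP; rewrite eqn_leq rank_leq_col /=.
  by have := mxrankS sub_plane; rewrite rank_plane.
have [j [k [_ _ njk]]] : exists j k, [/\ j \in setT, k \in setT & ~~ parallel (A j) (A k)].
  by apply: spanS_nparallel; rewrite rank3.
have [i det_nz|all_on] := pickP (fun i => det3 (A i) (A j) (A k) != 0).
  by exists i, j, k.
have : (spanS A setT <= <<A j>> + <<A k>>)%MS.
  by apply: spanS_sub => i _; rewrite sub_line_det3 //; move/negbFE: (all_on i).
by move/mxrankS; rewrite rank3 rank_line.
Qed.

Lemma rigidP : Defs.rigid A <->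
  (exists i j k, det3 (A i) (A j) (A k) != 0) /\
  (forall i, exists j1 k1 j2 k2, locked_by A i j1 k1 j2 k2).
Proof.
by split=> -[/nondegenerateP nd lockedA]; split=> // i; apply/lockedP.
Qed.

End Incidence.

Section ProjectiveInvariance.
Variable R : realType.
Implicit Types (a b : R) (x y : 'rV[R]_3) (M : 'M[R]_3).

Lemma det3_proj M a b c x y z :
  det3 (a *: (x *m M)) (b *: (y *m M)) (c *: (z *m M)) = a * b * c * (det3 x y z * \det M).
Proof. by rewrite det3_scale det3_mulmx. Qed.

Lemma parallel_proj M a b x y : M \in unitmx -> a != 0 -> b != 0 ->
  parallel (a *: (x *m M)) (b *: (y *m M)) = parallel x y.
Proof.
move=> M_unit a_nz b_nz; have detM_nz : \det M != 0 by rewrite -unitfE -unitmxE.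
apply/idP/idP => par; apply: parallel_of_det3 => w.
  have := parallel_det3 (w *m M) par; rewrite -[w *m M]scale1r det3_proj mul1r.
  by move/eqP; rewrite !mulf_eq0 (negbTE a_nz) (negbTE b_nz) (negbTE detM_nz) /= orbF => /eqP.
rewrite -[w](mulmxKV M_unit) -[w *m invmx M *m M]scale1r det3_proj.
by rewrite (parallel_det3 _ par) mul0r mulr0.
Qed.

Lemma proj_equiv_rigid n (C A : 'I_n -> 'rV[R]_3) :
  is_config C -> is_config A -> proj_equiv C A -> Defs.rigid C -> Defs.rigid A.
Proof.
move=> C_nz A_nz [M M_unit [s eqA]] /(rigidP C_nz) [[a [b [c det_nz]]] lockedC].
have detM_nz : \det M != 0 by rewrite -unitfE -unitmxE.
have det3_s (u v w : 'I_n) :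
    det3 (A (s u)) (A (s v)) (A (s w)) = 0 <-> det3 (C u) (C v) (C w) = 0.
  have [cu cu_nz ->] := eqA u; have [cv cv_nz ->] := eqA v; have [cw cw_nz ->] := eqA w.
  rewrite det3_proj; split => [/eqP|->]; last by rewrite mul0r mulr0.
  rewrite !mulf_eq0 (negbTE cu_nz) (negbTE cv_nz) (negbTE cw_nz) (negbTE detM_nz) /=.
  by rewrite orbF => /eqP.
have parallel_s (u v : 'I_n) : parallel (A (s u)) (A (s v)) = parallel (C u) (C v).
  by have [cu cu_nz ->] := eqA u; have [cv cv_nz ->] := eqA v; rewrite parallel_proj.
apply/(rigidP A_nz); split.
  by exists (s a), (s b), (s c); apply/eqP => /det3_s; apply/eqP.
move=> t; rewrite -(permKV s t).
have [j1 [k1 [j2 [k2 [neq n1 n2 [l1 l2] lines_neq]]]]] := lockedC (s^-1 t)%g.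
exists (s j1), (s k1), (s j2), (s k2); split.
- by case: neq => ? ? ? ?; rewrite !(inj_eq perm_inj).
- by rewrite parallel_s.
- by rewrite parallel_s.
- by split; apply/det3_s.
- by case=> /det3_s ? /det3_s ?; apply: lines_neq.
Qed.

End ProjectiveInvariance.

Section NormalForms.
Variable R : realType.

Lemma pt_coord (a b c : R) : (v0 (pt a b c) = a) * (v1 (pt a b c) = b) * (v2 (pt a b c) = c).
Proof. by rewrite /v0 /v1 /v2 !mxE. Qed.

Lemma pt_mulmx_frame (a b c : R) p q r : pt a b c *m frame_mx p q r = a *: p + b *: q + c *: r.
Proof. by rewrite mulmx_frame !pt_coord. Qed.

Variable A : 'I_6 -> 'rV[R]_3.
Hypothesis A_nz : is_config A.

Lemma doubled_triangle_proj_equiv a a' b b' c c' :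
  doubled_triangle A a a' b b' c c' -> proj_equiv (config_i R) A.
Proof.
case=> uniq6 aa' bb' cc' det_nz; have [g eq_g] := perm_of_uniq uniq6 erefl.
have [ca ca_nz ea] := parallel_scale_neq0 (A_nz a) (A_nz a') aa'.
have [cb cb_nz eb] := parallel_scale_neq0 (A_nz b) (A_nz b') bb'.
have [cc cc_nz ec] := parallel_scale_neq0 (A_nz c) (A_nz c') cc'.
exists (frame_mx (A a) (A b) (A c)); first exact: frame_mx_unit.
exists g => k; rewrite eq_g.
case: k => [[|[|[|[|[|[|//]]]]]] lt_k6];
  rewrite /config_i /fam6 /= pt_mulmx_frame !scale1r !scale0r ?addr0 ?add0r ?ea ?eb ?ec.
all: by [exists 1; rewrite ?scale1r ?oner_eq0 | exists ca | exists cb | exists cc].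
Qed.

Lemma quadrilateral_proj_equiv q0 q1 q2 q3 q4 q5 :
  quadrilateral A q0 q1 q2 q3 q4 q5 -> proj_equiv (config_ii R) A.
Proof.
case=> uniq6 [l014 l025] [l234 l135] [det_nz al_nz] [be_nz ga_nz].
have [g eq_g] := perm_of_uniq uniq6 erefl.
move: l014 l025 l234 l135 det_nz al_nz be_nz ga_nz.
set p := A q4; set q := A q5; set r := A q0; set z := A q3 => l014 l025 l234 l135.
(* The frame sends [(1, 1, 1)] to [al p + be q + ga r = det3 p q r *: z]. *)
set al := det3 z q r; set be := det3 p z r; set ga := det3 p q z => det_nz al_nz be_nz ga_nz.
exists (frame_mx (al *: p) (be *: q) (ga *: r)).
  by apply: frame_mx_unit; rewrite det3_scale !mulf_neq0.
exists g => k; rewrite eq_g.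
case: k => [[|[|[|[|[|[|//]]]]]] lt_k6];
  rewrite /config_ii /fam6 /= pt_mulmx_frame ?scale1r ?scale0r ?addr0 ?add0r.
- exact: scale_inv_scale.
- have par : parallel (al *: p + ga *: r) (A q1).
    by apply: cramer_meet_parallel;
      [exact: det_nz | exact: al_nz | det3_perm l014 | det3_perm l135].
  apply: parallel_scale_neq0 (A_nz q1) par.
  by apply: (@det3_neq0_neq0 _ _ q r); rewrite det3_linear det3_dup13 mulr0 addr0 mulf_neq0.
- have par : parallel (- (be *: q + ga *: r)) (A q2).
    have -> : - (be *: q + ga *: r) = det3 z p r *: q + det3 q p z *: r.
      by apply: row3P; rewrite /be /ga !det3E !coordE; ring.
    apply: cramer_meet_parallel; [| |det3_perm l025|det3_perm l234];
      by rewrite det3_cycle det3_swap oppr_eq0.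
  have v_nz : - (be *: q + ga *: r) != 0.
    rewrite oppr_eq0; apply: (@det3_neq0_neq0 _ _ p r).
    by rewrite det3_linear det3_dup13 mulr0 addr0 mulf_neq0 // det3_cycle det3_swap oppr_eq0.
  have [c c_nz ->] := parallel_scale_neq0 v_nz (A_nz q2) par.
  by exists (- c); rewrite ?oppr_eq0 // scaleNr scalerN.
- exists (det3 p q r)^-1; first by rewrite invr_eq0.
  by rewrite /al /be /ga -det3_cramer scalerA mulVf // scale1r.
- exact: scale_inv_scale.
- exact: scale_inv_scale.
Qed.

End NormalForms.

Section Configurations.
Variable R : realType.
Local Notation o k := (@Ordinal 6 k isT).

Ltac config_unfold := rewrite /locked_by /config_i /config_ii /fam6 /= /parallel /det3
  /cross0 /cross1 /cross2 !pt_coord.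
Ltac config_arith := first
  [ by [] | lra | (apply/eqP => ?; lra) | (case=> ? ?; lra)
  | (apply/negP => /and3P [/eqP ? /eqP ? /eqP ?]; lra) ].
Ltac config_locked := config_unfold;
  split; [split; by [] | config_arith | config_arith | split; config_arith | config_arith].

Lemma config_i_nz : is_config (config_i R).
Proof.
case=> [[|[|[|[|[|[|//]]]]]] ?]; apply/negP => /eqP /rowP coord0;
  move: (coord0 0) (coord0 1) (coord0 2); rewrite /config_i /fam6 /= !mxE /= => ? ? ?; lra.
Qed.

Lemma config_ii_nz : is_config (config_ii R).
Proof.
case=> [[|[|[|[|[|[|//]]]]]] ?]; apply/negP => /eqP /rowP coord0;
  move: (coord0 0) (coord0 1) (coord0 2); rewrite /config_ii /fam6 /= !mxE /= => ? ? ?; lra.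
Qed.

Lemma config_i_rigid : Defs.rigid (config_i R).
Proof.
apply/(rigidP config_i_nz); split.
  by exists (o 0), (o 2), (o 4); config_unfold; config_arith.
case=> [[|[|[|[|[|[|//]]]]]] ?].
- by exists (o 1), (o 2), (o 1), (o 4); config_locked.
- by exists (o 0), (o 2), (o 0), (o 4); config_locked.
- by exists (o 3), (o 0), (o 3), (o 4); config_locked.
- by exists (o 2), (o 0), (o 2), (o 4); config_locked.
- by exists (o 5), (o 0), (o 5), (o 2); config_locked.
- by exists (o 4), (o 0), (o 4), (o 2); config_locked.
Qed.

Lemma config_ii_rigid : Defs.rigid (config_ii R).
Proof.
apply/(rigidP config_ii_nz); split.
  by exists (o 0), (o 4), (o 5); config_unfold; config_arith.
case=> [[|[|[|[|[|[|//]]]]]] ?].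
- by exists (o 1), (o 4), (o 2), (o 5); config_locked.
- by exists (o 0), (o 4), (o 3), (o 5); config_locked.
- by exists (o 0), (o 5), (o 3), (o 4); config_locked.
- by exists (o 2), (o 4), (o 1), (o 5); config_locked.
- by exists (o 0), (o 1), (o 2), (o 3); config_locked.
- by exists (o 0), (o 2), (o 1), (o 3); config_locked.
Qed.

Lemma config_ii_nparallel a b : a != b -> ~~ parallel (config_ii R a) (config_ii R b).
Proof.
by case: a => [[|[|[|[|[|[|//]]]]]] ?]; case: b => [[|[|[|[|[|[|//]]]]]] ?] //= _;
  config_unfold; config_arith.
Qed.

Lemma proj_equiv_config_i_ii : ~ proj_equiv (config_i R) (config_ii R).
Proof.
case=> M M_unit [g eq_g]; have [c0 c0_nz e0] := eq_g (o 0); have [c1 c1_nz e1] := eq_g (o 1).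
have : parallel (config_ii R (g (o 0))) (config_ii R (g (o 1))).
  by rewrite e0 e1 parallel_proj // parallel_refl.
by rewrite (negbTE (config_ii_nparallel _)) // (inj_eq perm_inj).
Qed.

End Configurations.

Theorem proposition5p2 (R : realType) :
  (forall (n : nat) (A : 'I_n -> 'rV[R]_3),
      is_config A -> rigid A -> (6 <= n)%N) /\
  (forall A : 'I_6 -> 'rV[R]_3,
      is_config A -> (rigid A <-> (proj_equiv (config_i R) A \/ proj_equiv (config_ii R) A))) /\
  ~ proj_equiv (config_i R) (config_ii R).
Proof.
split; [|split; last exact: proj_equiv_config_i_ii].
- move=> n A A_nz /(rigidP A_nz) [nd lockedA]; have [//|n_lt6] := leqP 6 n.
  have [[a [a' [b [b' [c [c' [uniq6 _ _ _ _]]]]]]]|[q0 [q1 [q2 [q3 [q4 [q5 [uniq6 _ _ _ _]]]]]]]] :=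
    small_rigid_shape A_nz (ltnW n_lt6) nd lockedA;
  by have := uniq_size_ord uniq6; rewrite /= leqNgt n_lt6.
- move=> A A_nz; split.
    move/(rigidP A_nz) => [nd lockedA].
    case: (small_rigid_shape A_nz (leqnn 6) nd lockedA).
      by case=> a [a' [b [b' [c [c' tri]]]]]; left; apply: doubled_triangle_proj_equiv tri.
    by case=> q0 [q1 [q2 [q3 [q4 [q5 quad]]]]]; right; apply: quadrilateral_proj_equiv quad.
  case=> equiv.
    exact: proj_equiv_rigid (@config_i_nz R) A_nz equiv (@config_i_rigid R).
  exact: proj_equiv_rigid (@config_ii_nz R) A_nz equiv (@config_ii_rigid R).
Qed.
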